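(* The canonical collection $\mathcal{S}$ satisfies $$\mathrm{excess}(\mathrm{OPT})\ \ge\ 2\varepsilon\cdot\big(y(\mathcal{U}_{\mathrm{sep}})-\mathrm{val}(\mathcal{S})\big).$$
   Context: Steiner Forest: finite undirected graph $G=(V,E)$ with non-negative edge costs $(c_e)_{e\in E}$ and a set $\mathcal{D}$ of demand pairs $\{a,b\}\subseteq V$ (partners); feasible solutions are $F\subseteq E$ with each demand pair in one connected component of $(V,F)$, of cost $c(F)=\sum_{e\in F}c_e$. $\mathrm{OPT}$ is a fixed optimal solution that is inclusionwise minimal (no cost-$0$ edge can be omitted keeping feasibility). For $U\subseteq V$, $\delta(U)$ is the set of edges with exactly one endpoint in $U$; $U$ separates $S$ if $S\cap U\ne\emptyset$ and $S\setminus U\ne\emptyset$. The $\varepsilon$-extended moat-growing algorithm (fixed $\varepsilon\ge0$): time $t$ increases continuously from $0$ at unit rate; it maintains tight edges $F$ (initially empty), duals $y_S(t)\ge0$ (initially $0$), and budgets of components (initially $0$). $\mathcal{C}^t$ is the family of vertex sets of connected components of $(V,F)$. A component is demand-active if it contains a vertex not connected in $(V,F)$ to some partner; budget-active if not demand-active but with positive budget; active if either; $\mathcal{A}^t$ is the set of active components. Each $y_S$, $S\in\mathcal{A}^t$, grows at unit rate; budgets of demand-active components grow at rate $\varepsilon$ and of budget-active ones decrease at rate $1$; an edge $e$ with $\sum_{S:e\in\delta(S)}y_S(t)=c_e$ becomes tight and is added to $F$; merging components add budgets. $y_S=y_S(\infty)$; $\mathcal{U}_{\mathrm{sep}}$ is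 the set of $U\in\mathrm{supp}(y)$ separating some demand pair; $y(\mathcal{U}')=\sum_{U\in\mathcal{U}'}y_U$; $\mathrm{excess}(F)=c(F)-y(\mathcal{U}_{\mathrm{sep}})$. The deactivation time $\tau_v$ of $v$ is the largest $t$ such that for all $s<t$, $v$ lies in a set of $\mathcal{A}^s$. Vertices $u,v$ are actively connected if for some $t$ they lie in a common set of $\mathcal{C}^t$ and $\tau_u,\tau_v\ge t$ (an equivalence relation). For each $U\in\mathcal{U}_{\mathrm{sep}}$ fix a demand pair $\varphi(U)$ separated by $U$. For a demand pair $d$, $\mathrm{val}(d)=\sum_{U:\varphi(U)=d}y_U$. A demand pair $\{a,b\}$ is satisfied by a set $S$ if $\{a,b\}\subseteq S$, and by a collection if by some member; $\mathrm{val}(\mathcal{S})$ is the sum of $\mathrm{val}(d)$ over demand pairs $d$ satisfied by $\mathcal{S}$. Canonical collection: start with a family $\mathcal{F}$ in which each tree (connected component) of $\mathrm{OPT}$ is its own forest; for each $U\in\mathcal{U}_{\mathrm{sep}}$, merge all forests of $\mathcal{F}$ that connect some demand pair separated by $U$ into a single forest. For each $F\in\mathcal{F}$ let $r_F$ be a vertex of $F$ with maximum deactivation time; for each connected component $T$ of $F$, let $S$ be the set of vertices of $T$ actively connected to $r_F$; if $S\ne\emptyset$, add $S$ to $\mathcal{S}$. *)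

From HB Require Import structures.
From mathcomp Require Import all_boot all_order all_algebra.
From mathcomp Require Import boolp reals.
Set Implicit Arguments. Unset Strict Implicit. Unset Printing Implicit Defensive.
Import Order.TTheory GRing.Theory Num.Theory.
Local Open Scope ring_scope.

Section SteinerForest.
(* Graph G = (V,E): E is a finite type of edges, edge e has endpoints eu e, ev e.
   c = edge costs, D = set of demand pairs (2-element vertex sets). *)
Variables (R : realType) (V E : finType) (eu ev : E -> V) (c : E -> R)
          (D : {set {set V}}).

Definition delta (U : {set V}) : {set E} := [set e | (eu e \in U) != (ev e \in U)].

Definition separates (U S : {set V}) : bool := (S :&: U != set0) && (S :\: U != set0).

Definition adj (F : {set E}) : rel V :=
  fun u v => [exists e in F, ((eu e == u) && (ev e == v)) || ((eu e == v) && (ev e == u))].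
Definition conn (F : {set E}) (u v : V) : bool := connect (adj F) u v.
Definition comp (F : {set E}) (v : V) : {set V} := [set w | conn F v w].
Definition comps (F : {set E}) : {set {set V}} := [set comp F v | v : V].

Definition cost (F : {set E}) : R := \sum_(e in F) c e.
Definition feasible (F : {set E}) : bool :=
  [forall d in D, forall a in d, forall b in d, conn F a b].

Variable eps : R.

Definition load (y : {set V} -> R) (e : E) : R := \sum_(S : {set V} | e \in delta S) y S.

Definition demand_active (F : {set E}) (C : {set V}) : bool :=
  [exists v in C, exists w, ([set v; w] \in D) && ~~ conn F v w].
Definition budget_active (F : {set E}) (b : {set V} -> R) (C : {set V}) : bool :=
  ~~ demand_active F C && (0 < b C).
Definition active (F : {set E}) (b : {set V} -> R) (C : {set V}) : bool :=
  (C \in comps F) && (demand_active F C || budget_active F b C).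
Definition brate (F : {set E}) (b : {set V} -> R) (C : {set V}) : R :=
  if demand_active F C then eps else if budget_active F b C then -1 else 0.

(* Event-driven description of the continuous process.
   Phase i (for i < k) is the time interval [t i, t (i+1)); during it the tight
   edge set is F i, the duals are y i + (s - t i) * [S active], budgets evolve
   linearly; (F i, y i, b i) is the state at time t i after all edges that became
   tight at time t i were added and the components merged (budgets added).
   t (i+1) is the first time at which an event happens (a new edge becomes tight
   or a budget-active component runs out of budget).  At index k no component is
   active any more, and nothing changes afterwards. *)
Definition phase_step (t : nat -> R) (F : nat -> {set E}) (y b : nat -> {set V} -> R)
    (i : nat) : Prop :=
  let d := t i.+1 - t i in
  [/\ 0 < d,
      (forall S, y i.+1 S = y i S + (if active (F i) (b i) S then d else 0)),
      (forall e, load (y i.+1) e <= c e),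
      F i.+1 = F i :|: [set e | load (y i.+1) e == c e]
    & [/\ (forall C, C \in comps (F i.+1) ->
             b i.+1 C = \sum_(C' in comps (F i) | C' \subset C)
                           (b i C' + brate (F i) (b i) C' * d)),
          (forall C, C \in comps (F i) -> budget_active (F i) (b i) C -> d <= b i C)
        & (exists e, e \notin F i /\ load (y i.+1) e = c e) \/
          (exists C, [/\ C \in comps (F i), budget_active (F i) (b i) C & b i C = d])]].

Definition moat_run (k : nat) (t : nat -> R) (F : nat -> {set E})
    (y b : nat -> {set V} -> R) : Prop :=
  [/\ t 0%N = 0, (forall S, y 0%N S = 0), (forall C, b 0%N C = 0),
      F 0%N = [set e | load (y 0%N) e == c e]
    & (forall i, (i < k)%N -> phase_step t F y b i) /\
      (forall C, ~~ active (F k) (b k) C)].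

Variables (k : nat) (t : nat -> R) (F : nat -> {set E}) (y b : nat -> {set V} -> R).

Definition phase (s : R) : nat := (\max_(i < k.+1 | (t i <= s)%R) i)%N.
Definition A_at (s : R) : {set {set V}} := [set C | active (F (phase s)) (b (phase s)) C].
Definition C_at (s : R) : {set {set V}} := comps (F (phase s)).

Definition in_active_at (s : R) (v : V) : bool := [exists C in A_at s, v \in C].
Definition is_deact_time (v : V) (tv : R) : Prop :=
  (forall s, 0 <= s -> s < tv -> in_active_at s v) /\
  (forall t', (forall s, 0 <= s -> s < t' -> in_active_at s v) -> t' <= tv).

Definition act_conn (tau : V -> R) (u v : V) : Prop :=
  exists s, [/\ 0 <= s, s <= tau u, s <= tau v & exists2 C, C \in C_at s & (u \in C) && (v \in C)].

(* final duals y_S = y_S(infinity) = y k S *)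
Definition Usep : {set {set V}} :=
  [set U | (0 < y k U) && [exists d in D, separates U d]].
Definition ysum (Us : {set {set V}}) : R := \sum_(U in Us) y k U.
Definition excess (OPT : {set E}) : R := cost OPT - ysum Usep.

Definition val (phi : {set V} -> {set V}) (d : {set V}) : R :=
  \sum_(U in Usep | phi U == d) y k U.

(* A forest is a set of trees (vertex sets). *)
Definition merge_step (fam : {set {set {set V}}}) (U : {set V}) : {set {set {set V}}} :=
  let M := [set B in fam | [exists T in B, exists d in D, separates U d && (d \subset T)]] in
  if M == set0 then fam else (fam :\: M) :|: [set cover M].
Definition forests (OPT : {set E}) : {set {set {set V}}} :=
  foldl merge_step [set [set T] | T in comps OPT] (enum Usep).

Definition canonical_collection (OPT : {set E}) (tau : V -> R) (r : {set {set V}} -> V) : {set {set V}} :=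
  [set S : {set V} | [exists B in forests OPT, exists T in B,
     (S == [set v in T | `[< act_conn tau v (r B) >]]) && (S != set0)]].

Definition satisfied (Ss : {set {set V}}) (d : {set V}) : bool := [exists S in Ss, d \subset S].
Definition valS (phi : {set V} -> {set V}) (Ss : {set {set V}}) : R :=
  \sum_(d in D | satisfied Ss d) val phi d.

End SteinerForest.

From Pilot Require Import Defs.
From HB Require Import structures.
From mathcomp Require Import all_boot all_order all_algebra.
From mathcomp Require Import boolp reals.
From mathcomp Require Import ring lra.
Set Implicit Arguments. Unset Strict Implicit. Unset Printing Implicit Defensive.
Import Order.TTheory GRing.Theory Num.Theory.
Local Open Scope ring_scope.

(* Call a component witnessed at time s if it contains a vertex a
   of a demand pair {a, w} that the canonical collection does not satisfy, with a and w
   both active throughout [0, s). With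
     G(S) = |δ(S) ∩ OPT| - [S ∈ U_sep] - 2ε [S ∈ U_sep and φ(S) not satisfied],
   the quantity  Σ_S y_S G(S) + 2 · (total budget of witnessed components)  starts at 0
   and never decreases. An active S ∈ U_sep crosses OPT at least once, and if φ(S) is
   unsatisfied then S is witnessed and earns budget at rate ε. A budget-active witnessed
   component crosses OPT at least twice: exactly once contradicts the minimality of
   OPT, while not at all puts the whole forest of the witness a, hence its root r_F,
   inside the component, so that a and w are both actively connected to r_F and the
   pair is satisfied. At the end all budgets are nonpositive, and dual feasibility gives
   Σ_S y_S |δ(S) ∩ OPT| ≤ c(OPT). *)

Lemma card2_set2 (T : finType) (d : {set T}) p q :
  #|d| = 2%N -> p \in d -> q \in d -> p != q -> d = [set p; q].
Proof.
move=> d2 pd qd pq; apply/esym/eqP; rewrite eqEcard d2 cards2 pq andbT.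
by apply/subsetP => x; rewrite !inE => /orP[/eqP->|/eqP->].
Qed.

Lemma separatesN_mem_eq (T : finType) (S d : {set T}) a b :
  ~~ separates S d -> a \in d -> b \in d -> (a \in S) = (b \in S).
Proof.
move=> nsep ad bd; apply/idP/idP => H; apply/negPn/negP => H'; move/negP: nsep; apply;
  apply/andP; split; apply/set0Pn.
- by exists a; rewrite !inE ad H.
- by exists b; rewrite !inE bd H'.
- by exists b; rewrite !inE bd H.
- by exists a; rewrite !inE ad H'.
Qed.

Section Connectivity.
Variables (V E : finType) (eu ev : E -> V).
Implicit Types (F : {set E}) (S C : {set V}).

Local Notation conn := (conn eu ev).
Local Notation component := (Defs.comp eu ev).
Local Notation comps := (comps eu ev).

Lemma adj_sym F : symmetric (adj eu ev F).
Proof.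
by move=> u v; apply/existsP/existsP => -[e /andP[eF H]]; exists e; rewrite eF orbC.
Qed.

Lemma conn_refl F v : conn F v v.
Proof. exact: connect0. Qed.

Lemma connC F u v : conn F u v = conn F v u.
Proof. by rewrite /conn (sym_connect_sym (@adj_sym F)). Qed.

Lemma conn_trans F u v w : conn F u v -> conn F v w -> conn F u w.
Proof. exact: connect_trans. Qed.

Lemma adjP F u v : adj eu ev F u v ->
  exists2 e, e \in F & (eu e = u /\ ev e = v) \/ (eu e = v /\ ev e = u).
Proof.
by case/existsP => e /andP[eF /orP[] /andP[/eqP h1 /eqP h2]]; exists e => //; [left|right].
Qed.

Lemma conn_edge F e : e \in F -> conn F (eu e) (ev e).
Proof. by move=> eF; apply/connect1/existsP; exists e; rewrite eF !eqxx. Qed.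

Lemma conn_sub F F' u v : F \subset F' -> conn F u v -> conn F' u v.
Proof.
move=> sFF'; apply: connect_sub => x z /adjP[e eF He].
have e' : conn F' (eu e) (ev e) by apply/conn_edge/(subsetP sFF').
by case: He => -[<- <-] //; rewrite connC in e'.
Qed.

Lemma mem_comp F v w : (w \in component F v) = conn F v w.
Proof. by rewrite inE. Qed.

Lemma comp_refl F v : v \in component F v.
Proof. by rewrite mem_comp conn_refl. Qed.

Lemma comp_comps F v : component F v \in comps F.
Proof. exact: imset_f. Qed.

Lemma comps_compE F C v : C \in comps F -> v \in C -> C = component F v.
Proof.
case/imsetP=> u _ ->; rewrite mem_comp => uv; apply/setP => w; rewrite !mem_comp.
by apply/idP/idP => [|/(conn_trans uv)//]; apply: conn_trans; rewrite connC.
Qed.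

Lemma comp_sub F F' v : F \subset F' -> component F v \subset component F' v.
Proof. by move=> sFF'; apply/subsetP => w; rewrite !mem_comp; apply: conn_sub. Qed.

Lemma conn_mem_eq F S u v :
  [disjoint delta eu ev S & F] -> conn F u v -> (u \in S) = (v \in S).
Proof.
move=> dis; apply: closed_connect => x z /adjP[e eF He].
have : e \notin delta eu ev S by rewrite (disjointFl dis eF).
by rewrite inE negbK => /eqP; case: He => -[<- <-].
Qed.

Lemma conn_setD1 F e x z : e \in F -> conn F x z ->
  [|| conn (F :\ e) x z,
      conn (F :\ e) x (eu e) && conn (F :\ e) (ev e) z |
      conn (F :\ e) x (ev e) && conn (F :\ e) (eu e) z].
Proof.
move=> eF xz; set F' := F :\ e.
pose P z := [|| conn F' x z, conn F' x (eu e) && conn F' (ev e) z |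
                conn F' x (ev e) && conn F' (eu e) z].
suff cl : closed (adj eu ev F) [pred z | P z].
  by have := closed_connect cl xz; rewrite !inE /P conn_refl /= => <-.
move=> z1 z2 /adjP[f fF Hf]; rewrite !inE; change (P z1 = P z2).
have [efe|nfe] := eqVneq f e.
  subst f; suff key : P (eu e) = P (ev e) by case: Hf => -[<- <-]; rewrite key.
  rewrite /P !conn_refl !andbT.
  by case: (conn F' x (eu e)); case: (conn F' x (ev e)); rewrite /= ?orbT.
have z12 : conn F' z1 z2.
  by case: Hf => -[<- <-]; [|rewrite connC]; apply: conn_edge; rewrite !inE nfe.
have z21 : conn F' z2 z1 by rewrite connC.
by rewrite /P; apply/idP/idP => /or3P[h|/andP[-> h]|/andP[-> h]];
  rewrite ?(conn_trans h z12) ?(conn_trans h z21) ?orbT.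
Qed.

Lemma big_comps_refine (R : nmodType) F1 F2 (f : {set V} -> R) : F1 \subset F2 ->
  \sum_(C in comps F2) \sum_(C' in comps F1 | C' \subset C) f C' =
  \sum_(C' in comps F1) f C'.
Proof.
move=> s12; rewrite (exchange_big_dep (mem (comps F1))) /=; last by move=> ? ? _ /andP[].
apply: eq_bigr => _ /imsetP[v _ ->]; rewrite (big_pred1 (component F2 v)) // => C /=.
apply/andP/eqP => [[HC /andP[_ sub]]|->]; last by rewrite comp_comps comp_comps comp_sub.
by apply: comps_compE HC _; apply: (subsetP sub); apply: comp_refl.
Qed.

End Connectivity.

Section OptimalForest.
Variables (R : realType) (V E : finType) (eu ev : E -> V) (c : E -> R)
          (D : {set {set V}}) (OPT : {set E}).
Hypothesis c_ge0 : forall e, 0 <= c e.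
Hypothesis feasOPT : feasible eu ev D OPT.
Hypothesis optOPT : forall F' : {set E}, feasible eu ev D F' -> cost c OPT <= cost c F'.
Hypothesis minOPT : forall e, e \in OPT -> c e = 0 -> ~~ feasible eu ev D (OPT :\ e).

Definition crossing (S : {set V}) : nat := #|delta eu ev S :&: OPT|.

Lemma feasible_conn F d a b : feasible eu ev D F -> d \in D -> a \in d -> b \in d ->
  conn eu ev F a b.
Proof.
move=> /forallP/(_ d)/implyP feas_d dD ad bd.
by move: feas_d => /(_ dD)/forallP/(_ a)/implyP/(_ ad)/forallP/(_ b)/implyP/(_ bd).
Qed.

Lemma crossing0_mem_eq S u v :
  crossing S = 0%N -> conn eu ev OPT u v -> (u \in S) = (v \in S).
Proof. by move/cards0_eq/eqP; rewrite setI_eq0; apply: conn_mem_eq. Qed.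

Lemma separates_crossing_gt0 S d : d \in D -> separates S d -> (0 < crossing S)%N.
Proof.
move=> dD /andP[/set0Pn[a /setIP[ad aS]] /set0Pn[b /setDP[bd bS]]].
rewrite lt0n; apply: contraNneq bS => /crossing0_mem_eq cr0.
by rewrite -(cr0 a) // (feasible_conn feasOPT dD).
Qed.

(* Removing the only [OPT]-edge of a cut that separates no demand pair keeps [OPT]
   feasible, which minimality forbids. *)
Lemma crossing_neq1 S : (forall d, d \in D -> ~~ separates S d) -> crossing S != 1%N.
Proof.
move=> nsep; apply/negP => /cards1P[e cutE].
have /setIP[e_cut eOPT] : e \in delta eu ev S :&: OPT by rewrite cutE set11.
have e_side : (eu e \in S) != (ev e \in S) by move: e_cut; rewrite inE.
have dis : [disjoint delta eu ev S & OPT :\ e].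
  by rewrite -setI_eq0 setIDA cutE; apply/eqP/setP => f; rewrite !inE; case: eqP.
have feas' : feasible eu ev D (OPT :\ e).
  apply/forallP => d; apply/implyP => dD; apply/forallP => a; apply/implyP => ad.
  apply/forallP => b; apply/implyP => bd.
  have ab := separatesN_mem_eq (nsep d dD) ad bd.
  case/or3P: (conn_setD1 eOPT (feasible_conn feasOPT dD ad bd)) => [//| |] /andP[h1 h2];
    by move: e_side; rewrite -(conn_mem_eq dis h1) (conn_mem_eq dis h2) ab eqxx.
have [c0|cpos] := eqVneq (c e) 0; first by move: (minOPT eOPT c0); rewrite feas'.
have := optOPT feas'; rewrite /cost (big_setD1 e eOPT) /=.
have := c_ge0 e; rewrite le0r (negbTE cpos) /=; lra.
Qed.

End OptimalForest.

Section MoatRun.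
Variables (R : realType) (V E : finType) (eu ev : E -> V) (c : E -> R)
          (D : {set {set V}}) (eps : R) (k : nat) (t : nat -> R)
          (F : nat -> {set E}) (y b : nat -> {set V} -> R).
Hypothesis run : moat_run eu ev c D eps k t F y b.
Hypothesis eps_ge0 : 0 <= eps.

Local Notation act i S := (active eu ev D (F i) (b i) S).
Local Notation DA i S := (demand_active eu ev D (F i) S).
Local Notation cps i := (comps eu ev (F i)).
Local Notation cn i := (conn eu ev (F i)).
Local Notation cmp i := (Defs.comp eu ev (F i)).
Local Notation brate i := (brate eu ev D eps (F i) (b i)).

Lemma run_t0 : t 0%N = 0. Proof. by case: run. Qed.
Lemma run_y0 S : y 0%N S = 0. Proof. by case: run => _ H. Qed.
Lemma run_b0 C : b 0%N C = 0. Proof. by case: run => _ _ H. Qed.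
Lemma run_step i : (i < k)%N -> phase_step eu ev c D eps t F y b i.
Proof. by case: run => _ _ _ _ [H _]; apply: H. Qed.
Lemma run_final C : ~~ act k C.
Proof. by case: run => _ _ _ _ [_ H]. Qed.

Lemma phase_length_gt0 i : (i < k)%N -> 0 < t i.+1 - t i.
Proof. by case/run_step. Qed.

Lemma t_ltn i j : (i < j)%N -> (j <= k)%N -> t i < t j.
Proof.
move=> ij; elim: j ij => // j IH; rewrite ltnS leq_eqVlt => /predU1P[<-|ij] jk.
  by have := phase_length_gt0 jk; rewrite subr_gt0.
by apply: lt_trans (IH ij (ltnW jk)) _; have := phase_length_gt0 jk; rewrite subr_gt0.
Qed.

Lemma t_ge0 i : (i <= k)%N -> 0 <= t i.
Proof. by case: i => [|i] ik; rewrite -run_t0 // ltW // t_ltn. Qed.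

Lemma F_subS i : (i < k)%N -> F i \subset F i.+1.
Proof. by case/run_step => _ _ _ -> _; apply: subsetUl. Qed.

Lemma F_sub i j : (i <= j)%N -> (j <= k)%N -> F i \subset F j.
Proof.
move=> ij; elim: j ij => [|j IH]; first by rewrite leqn0 => /eqP ->.
rewrite leq_eqVlt => /predU1P[->//|]; rewrite ltnS => ij jk.
exact: subset_trans (IH ij (ltnW jk)) (F_subS jk).
Qed.

Lemma phaseE i s : (i < k)%N -> t i <= s -> s < t i.+1 -> phase k t s = i.
Proof.
move=> ik lo hi; rewrite /phase; apply/eqP; rewrite eqn_leq; apply/andP; split.
  apply/bigmax_leqP => j /= tj; rewrite leqNgt; apply/negP => ij.
  have : t i.+1 <= t j.
    move: ij; rewrite leq_eqVlt => /predU1P[<-//|ij].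
    exact/ltW/(t_ltn ij (ltn_ord j)).
  by move=> /(lt_le_trans hi) /(le_lt_trans tj); rewrite ltxx.
have ik' : (i < k.+1)%N by apply: ltnW.
by apply: (@leq_bigmax_cond _ (fun j : 'I_k.+1 => t j <= s) (fun j => val j) (Ordinal ik')).
Qed.

Lemma act_conn_phase (tau : V -> R) i S u v : (i < k)%N -> S \in cps i ->
  u \in S -> v \in S -> t i <= tau u -> t i <= tau v -> act_conn eu ev k t F tau u v.
Proof.
move=> ik HS uS vS tu tv; exists (t i); split => //; first exact/t_ge0/ltnW.
by exists S; rewrite ?uS ?vS // /C_at (phaseE ik) // t_ltn.
Qed.

Definition active_before i v : Prop :=
  forall s, 0 <= s -> s < t i -> in_active_at eu ev D k t F b s v.

Lemma active_before0 v : active_before 0 v.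
Proof. by move=> s s0; rewrite run_t0 => /(le_lt_trans s0); rewrite ltxx. Qed.

Lemma active_beforeS i v : (i < k)%N -> active_before i v -> act i (cmp i v) ->
  active_before i.+1 v.
Proof.
move=> ik alive Ha s s0 hi; have [lo|lo] := ltP s (t i); first exact: alive.
apply/existsP; exists (cmp i v).
by rewrite /A_at inE (phaseE ik lo hi) Ha comp_refl.
Qed.

Lemma demand_active_comp i v w : [set v; w] \in D -> ~~ cn i v w -> DA i (cmp i v).
Proof.
move=> vwD nvw; apply/existsP; exists v; rewrite comp_refl /=.
by apply/existsP; exists w; rewrite vwD nvw.
Qed.

Lemma active_before_demand i a w : (i <= k)%N -> [set a; w] \in D -> ~~ cn i a w ->
  active_before i a.
Proof.
elim: i => [|i IH] ik awD naw; first exact: active_before0.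
have naw' : ~~ cn i a w by apply: contra naw; apply/conn_sub/F_subS.
apply: active_beforeS => //; first exact: IH (ltnW ik) awD naw'.
by rewrite /active comp_comps (demand_active_comp awD naw').
Qed.

Lemma y_step i S : (i < k)%N ->
  y i.+1 S = y i S + (if act i S then t i.+1 - t i else 0).
Proof. by case/run_step. Qed.

Lemma y_gt0_active S : 0 < y k S -> exists2 j, (j < k)%N & act j S.
Proof.
suff H j : (j <= k)%N -> 0 < y j S -> exists2 j', (j' < k)%N & act j' S by apply: H.
elim: j => [|j IH] jk; first by rewrite run_y0 ltxx.
rewrite y_step //; case: ifP => [Ha _|_]; first by exists j.
by rewrite addr0; apply: IH (ltnW jk).
Qed.

Lemma load_final_le e : 0 <= c e -> load eu ev (y k) e <= c e.
Proof.
move=> ce_ge0; have [k0|k_gt0] := posnP k.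
  by rewrite /load k0 big1 // => S _; rewrite run_y0.
have [_ _ H _ _] : phase_step eu ev c D eps t F y b k.-1.
  by apply: run_step; rewrite ltn_predL.
by rewrite -(prednK k_gt0) H.
Qed.

Definition budget_end i C : R := b i C + brate i C * (t i.+1 - t i).

Lemma b_step i C : (i < k)%N -> C \in cps i.+1 ->
  b i.+1 C = \sum_(C' in cps i | C' \subset C) budget_end i C'.
Proof. by case/run_step => _ _ _ _ [H _ _] /H. Qed.

Lemma budget_end_ge0 i C : (i < k)%N -> C \in cps i -> 0 <= b i C -> 0 <= budget_end i C.
Proof.
move=> ik HC b_ge0; have d_gt0 := phase_length_gt0 ik.
rewrite /budget_end /Defs.brate; case: ifP => HDA.
  by rewrite addr_ge0 // mulr_ge0 // ltW.
case: ifP => HBA; last by rewrite mul0r addr0.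
by case/run_step: ik => _ _ _ _ [_ H _]; rewrite mulN1r subr_ge0 H.
Qed.

Lemma b_ge0 j C : (j <= k)%N -> C \in cps j -> 0 <= b j C.
Proof.
elim: j C => [|j IH] C jk HC; first by rewrite run_b0.
rewrite b_step //; apply: sumr_ge0 => C' /andP[HC' _].
by apply: budget_end_ge0 => //; apply: IH => //; apply: ltnW.
Qed.

Lemma brate_inactive i C : C \in cps i -> ~~ act i C -> brate i C = 0.
Proof.
move=> HC; rewrite /active HC negb_or => /andP[nD nB].
by rewrite /Defs.brate (negbTE nD) (negbTE nB).
Qed.

Lemma budget_end_gt0_active i C : C \in cps i -> 0 < budget_end i C -> act i C.
Proof.
move=> HC; apply: contraTT => na; rewrite /budget_end brate_inactive // mul0r addr0 -leNgt.
by move: na; rewrite /active HC negb_or /budget_active => /andP[-> /=]; rewrite -leNgt.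
Qed.

End MoatRun.

Section Forests.
Variables (R : realType) (V E : finType) (eu ev : E -> V) (D : {set {set V}})
          (k : nat) (y : nat -> {set V} -> R) (OPT : {set E}).

Local Notation Usep := (Usep D k y).
Local Notation forests := (forests eu ev D k y OPT).

Lemma forests_ind (P : {set {set {set V}}} -> Prop) :
  P [set [set T] | T in comps eu ev OPT] ->
  (forall fam U, U \in Usep -> P fam -> P (merge_step D fam U)) ->
  P forests.
Proof.
move=> Pinit Pstep; rewrite /forests.
have : all (mem Usep) (enum Usep) by apply/allP => U; rewrite mem_enum.
elim: (enum Usep) [set [set T] | T in _] Pinit => //= U Us IH fam Pfam /andP[UU UUs].
exact: IH (Pstep _ _ UU Pfam) UUs.
Qed.

Lemma forests_cover T : T \in comps eu ev OPT -> exists2 B, B \in forests & T \in B.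
Proof.
move=> TOPT; apply: (forests_ind (P := fun fam => exists2 B, B \in fam & T \in B))
  => [|fam U _ [B Bfam TB]].
  by exists [set T]; rewrite ?set11 ?imset_f.
rewrite /merge_step; set M := [set B in fam | _]; case: eqP => _; first by exists B.
have [BM|BnM] := boolP (B \in M); last by exists B; rewrite // in_setU in_setD BnM Bfam.
by exists (cover M); rewrite ?inE ?eqxx ?orbT //; apply/bigcupP; exists B.
Qed.

(* If a forest merged along [U] meets [S], laminarity puts [U] inside [S]; every
   forest merged along [U] has a demand pair separated by [U], so it meets [S] too. *)
Lemma forests_closed (S : {set V}) :
  (forall v, v \in S -> Defs.comp eu ev OPT v \subset S) ->
  (forall U v x, U \in Usep -> v \in U -> v \in S -> x \in S -> x \notin U -> U \subset S) ->
  forall B, B \in forests -> forall T v, T \in B -> v \in T -> v \in S -> cover B \subset S.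
Proof.
move=> treeS lamS; apply: (forests_ind (P := fun fam => forall B, B \in fam ->
  forall T v, T \in B -> v \in T -> v \in S -> cover B \subset S)) => [|fam U UU IH].
  move=> _ /imsetP[T0 T0OPT ->] T v; rewrite inE => /eqP-> vT vS.
  by rewrite cover1 (comps_compE T0OPT vT) treeS.
rewrite /merge_step; set M := [set B in fam | _]; case: eqP => _; first exact: IH.
move=> B; rewrite !inE => /orP[/andP[_ Bfam]|/eqP->]; first exact: IH.
have inM B0 : B0 \in M -> exists T1, exists2 d, [/\ T1 \in B0, d \in D & d \subset T1] &
    separates U d.
  rewrite inE => /andP[_ /existsP[T1 /andP[T1B0 /existsP[d /and3P[dD sepd dT1]]]]].
  by exists T1, d.
move=> T0 v /bigcupP[B0 B0M T0B0] vT0 vS.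
have B0fam : B0 \in fam by move: B0M; rewrite inE => /andP[].
have [T1 [d [T1B0 _ dT1] /andP[/set0Pn[u /setIP[ud uU]] /set0Pn[x /setDP[xd xU]]]]] :=
  inM _ B0M.
have dS : d \subset S.
  apply: subset_trans (subset_trans dT1 _) (IH _ B0fam _ _ T0B0 vT0 vS).
  exact: bigcup_sup.
have US := lamS U u x UU uU (subsetP dS _ ud) (subsetP dS _ xd) xU.
apply/subsetP => z /bigcupP[T2 /bigcupP[B2 B2M T2B2] zT2].
have [T3 [d2 [T3B2 _ d2T3] /andP[/set0Pn[w /setIP[wd2 wU]] _]]] := inM _ B2M.
have B2fam : B2 \in fam by move: B2M; rewrite inE => /andP[].
have B2S := IH _ B2fam _ _ T3B2 (subsetP d2T3 _ wd2) (subsetP US _ wU).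
by apply: (subsetP B2S); apply/bigcupP; exists T2.
Qed.

End Forests.

Section Potential.
Variables (R : realType) (V E : finType) (eu ev : E -> V) (c : E -> R)
  (D : {set {set V}}) (eps : R)
  (k : nat) (t : nat -> R) (F : nat -> {set E}) (y b : nat -> {set V} -> R)
  (OPT : {set E}) (tau : V -> R) (phi : {set V} -> {set V})
  (r : {set {set V}} -> V).
Hypothesis c_ge0 : forall e, 0 <= c e.
Hypothesis D2 : forall d, d \in D -> #|d| = 2%N.
Hypothesis eps_ge0 : 0 <= eps.
Hypothesis run : moat_run eu ev c D eps k t F y b.
Hypothesis feasOPT : feasible eu ev D OPT.
Hypothesis optOPT : forall F' : {set E}, feasible eu ev D F' -> cost c OPT <= cost c F'.
Hypothesis minOPT : forall e, e \in OPT -> c e = 0 -> ~~ feasible eu ev D (OPT :\ e).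
Hypothesis tauP : forall v, is_deact_time eu ev D k t F b v (tau v).
Hypothesis phiP : forall U, U \in Usep D k y -> phi U \in D /\ separates U (phi U).
Hypothesis rP : forall B, B \in forests eu ev D k y OPT ->
  r B \in cover B /\ (forall v, v \in cover B -> tau v <= tau (r B)).

Implicit Types (S U C T : {set V}) (a v w x : V).

Local Notation act i S := (active eu ev D (F i) (b i) S).
Local Notation DA i S := (demand_active eu ev D (F i) S).
Local Notation cps i := (comps eu ev (F i)).
Local Notation cn i := (conn eu ev (F i)).
Local Notation cmp i := (Defs.comp eu ev (F i)).
Local Notation brate i := (brate eu ev D eps (F i) (b i)).
Local Notation crossing := (crossing eu ev OPT).
Local Notation Usp := (Usep D k y).
Local Notation CC := (canonical_collection eu ev D k t F y OPT tau r).
Local Notation sat X := (satisfied CC X).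
Local Notation alive := (active_before eu ev D k t F b).

Lemma separates_demand_active i S d : S \in cps i -> d \in D -> separates S d -> DA i S.
Proof.
move=> HS dD /andP[/set0Pn[p /setIP[pd pS]] /set0Pn[q /setDP[qd qS]]].
have pq : p != q by apply: contraNneq qS => <-.
apply/existsP; exists p; rewrite pS /=; apply/existsP; exists q.
rewrite -(card2_set2 (D2 dD) pd qd pq) dD /=; apply: contra qS => pq'.
by rewrite (comps_compE HS pS) mem_comp.
Qed.

Lemma Usep_laminar i U S v x : (i <= k)%N -> U \in Usp -> S \in cps i ->
  v \in U -> v \in S -> x \in S -> x \notin U -> U \subset S.
Proof.
move=> ik UU HS vU vS xS xU.
have [j jk actU] : exists2 j, (j < k)%N & act j U.
  by apply: (y_gt0_active run); move: UU; rewrite inE => /andP[].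
have HUj : U \in cps j by case/andP: actU.
rewrite (comps_compE HUj vU) (comps_compE HS vS).
have [ji|ij] := leqP j i; first exact/comp_sub/(F_sub run ji ik).
have /subsetP/(_ x) : cmp i v \subset cmp j v.
  exact/comp_sub/(F_sub run (ltnW ij) (ltnW jk)).
by rewrite -(comps_compE HS vS) -(comps_compE HUj vU) (negbTE xU) => /(_ xS).
Qed.

Definition witnessed i (C : {set V}) : Prop := exists a w,
  [/\ a \in C, [set a; w] \in D, ~~ sat [set a; w], alive i a & alive i w].

Lemma witnessed_up i C' C : (i < k)%N -> C' \in cps i -> act i C' -> C' \subset C ->
  witnessed i C' -> witnessed i.+1 C.
Proof.
move=> ik HC' actC' C'C [a [w [aC' awD nsat alive_a alive_w]]].
have actC'_of u : u \in C' -> act i (cmp i u) by move=> uC'; rewrite -(comps_compE HC' uC').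
exists a, w; split => //; first exact: (subsetP C'C).
  by apply: (active_beforeS run ik alive_a); apply: actC'_of.
apply: (active_beforeS run ik alive_w).
have [aw|naw] := boolP (cn i a w).
  by apply: actC'_of; rewrite (comps_compE HC' aC') mem_comp.
have waD : [set w; a] \in D by rewrite setUC.
by rewrite /active comp_comps (demand_active_comp waD) // connC.
Qed.

Lemma Usep_witnessed i S : (i < k)%N -> act i S -> S \in Usp -> ~~ sat (phi S) ->
  witnessed i S.
Proof.
move=> ik actS US nsat; have [dD sepd] := phiP US.
move: (sepd) => /andP[/set0Pn[p /setIP[pd pS]] /set0Pn[q /setDP[qd qS]]].
have pq : p != q by apply: contraNneq qS => <-.
have dE := card2_set2 (D2 dD) pd qd pq.
have HS : S \in cps i by case/andP: actS.
have npq : ~~ cn i p q by apply: contra qS => pq'; rewrite (comps_compE HS pS) mem_comp.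
have pqD : [set p; q] \in D by rewrite -dE.
have qpD : [set q; p] \in D by rewrite setUC.
exists p, q; rewrite -dE; split => //.
  by apply: (active_before_demand run (ltnW ik) pqD).
by apply: (active_before_demand run (ltnW ik) qpD); rewrite connC.
Qed.

Lemma forest_pair_satisfied B T a w : B \in forests eu ev D k y OPT -> T \in B ->
  a \in T -> w \in T -> act_conn eu ev k t F tau a (r B) ->
  act_conn eu ev k t F tau w (r B) -> sat [set a; w].
Proof.
move=> HB TB aT wT ar wr; apply/existsP.
exists [set v in T | `[< act_conn eu ev k t F tau v (r B) >]]; apply/andP; split.
  rewrite inE; apply/existsP; exists B; rewrite HB; apply/existsP; exists T.
  by rewrite TB eqxx /=; apply/set0Pn; exists a; rewrite inE aT; apply/asboolP.
by apply/subsetP => x; rewrite !inE => /orP[]/eqP->; rewrite ?aT ?wT; apply/asboolP.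
Qed.

Lemma witnessed_crossing_ge2 i S : (i < k)%N -> S \in cps i -> ~~ DA i S ->
  witnessed i S -> (2 <= crossing S)%N.
Proof.
move=> ik HS nDA [a [w [aS awD nsat alive_a alive_w]]].
have nsep d : d \in D -> ~~ separates S d.
  by move=> dD; apply: contra nDA; apply: separates_demand_active.
suff cr_neq0 : crossing S != 0%N.
  have := crossing_neq1 c_ge0 feasOPT optOPT minOPT nsep.
  by move: cr_neq0; case: (crossing S) => [|[|]].
apply/eqP => cr0.
have aw : cn i a w.
  by apply: contraNT nDA => naw; rewrite (comps_compE HS aS) (demand_active_comp awD naw).
have wS : w \in S by rewrite (comps_compE HS aS) mem_comp.
have treeS v : v \in S -> Defs.comp eu ev OPT v \subset S.
  by move=> vS; apply/subsetP => u; rewrite mem_comp => /(crossing0_mem_eq cr0) <-.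
have lamS U v x : U \in Usp -> v \in U -> v \in S -> x \in S -> x \notin U -> U \subset S.
  by move=> UU; apply: Usep_laminar (ltnW ik) UU HS.
have [B HB TB] := forests_cover D k y (comp_comps eu ev OPT a).
have BS := forests_closed treeS lamS HB TB (comp_refl eu ev OPT a) aS.
have [rB tau_rB] := rP HB.
have aB : a \in cover B by apply/bigcupP; exists (Defs.comp eu ev OPT a); rewrite ?comp_refl.
have ta : t i <= tau a := (tauP a).2 _ alive_a.
have tw : t i <= tau w := (tauP w).2 _ alive_w.
have tr : t i <= tau (r B) := le_trans ta (tau_rB _ aB).
have wT : w \in Defs.comp eu ev OPT a.
  by rewrite mem_comp (feasible_conn feasOPT awD) // !inE eqxx ?orbT.
apply: (negP nsat); apply: (forest_pair_satisfied HB TB (comp_refl eu ev OPT a) wT).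
  exact: (act_conn_phase run ik HS aS (subsetP BS _ rB) ta tr).
exact: (act_conn_phase run ik HS wS (subsetP BS _ rB) tw tr).
Qed.

Definition witness_weight i C : R := if `[< witnessed i C >] then 1 else 0.

Definition witnessed_budget j : R := \sum_(C in cps j) witness_weight j C * b j C.

Definition gain S : R :=
  (crossing S)%:R - (S \in Usp)%:R - 2 * eps * ((S \in Usp) && ~~ sat (phi S))%:R.

Definition dual_gain j : R := \sum_S y j S * gain S.

Lemma witness_weight_ge0 i C : 0 <= witness_weight i C.
Proof. by rewrite /witness_weight; case: ifP. Qed.

Lemma gain_active_ge0 i S : (i < k)%N -> act i S ->
  0 <= gain S + 2 * (witness_weight i S * brate i S).
Proof.
move=> ik actS; have HS : S \in cps i by case/andP: actS.
have ww_ge0 := witness_weight_ge0 i S.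
have cr_ge0 : 0 <= (crossing S)%:R :> R := ler0n _ _.
rewrite /gain /Defs.brate; case US: (S \in Usp) => /=.
  have [d dD sepd] : exists2 d, d \in D & separates S d.
    by move: US; rewrite inE => /andP[_ /existsP[d /andP[]]]; exists d.
  have cr1 : 1 <= (crossing S)%:R :> R.
    by rewrite ler1n (separates_crossing_gt0 feasOPT dD sepd).
  rewrite (separates_demand_active HS dD sepd).
  case satS: (sat (phi S)) => /=.
    by have := mulr_ge0 ww_ge0 eps_ge0; rewrite ?mulr1n ?mulr0n; lra.
  by rewrite /witness_weight asboolT ?mulr1n; [lra | apply: Usep_witnessed; rewrite ?satS].
rewrite ?mulr0n; case: ifP => DAS; first by have := mulr_ge0 ww_ge0 eps_ge0; lra.
case: ifP => _; last lra.
rewrite /witness_weight; case: asboolP => witS; last lra.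
have := witnessed_crossing_ge2 ik HS (negbT DAS) witS; rewrite -(ler_nat R); lra.
Qed.

Lemma witnessed_budget_step i : (i < k)%N ->
  witnessed_budget i + (t i.+1 - t i) * \sum_(S | act i S) witness_weight i S * brate i S
  <= witnessed_budget i.+1.
Proof.
move=> ik.
have -> : \sum_(S | act i S) witness_weight i S * brate i S =
          \sum_(C in cps i) witness_weight i C * brate i C.
  rewrite [RHS](bigID (fun S => act i S)) /= [X in _ + X]big1 ?addr0; last first.
    by move=> C /andP[HC nact]; rewrite brate_inactive // mulr0.
  by apply: eq_bigl => S; apply/idP/andP => [actS|[]//]; case/andP: (actS) => ->.
rewrite /witnessed_budget mulr_sumr -big_split /=.
rewrite -(big_comps_refine eu ev _ (F_subS run ik)).
apply: ler_sum => C HC; rewrite (b_step run) // mulr_sumr.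
apply: ler_sum => C' /andP[HC' C'C].
have -> : witness_weight i C' * b i C' + (t i.+1 - t i) * (witness_weight i C' * brate i C')
  = witness_weight i C' * budget_end eu ev D eps t F b i C' by rewrite /budget_end; ring.
have := budget_end_ge0 run eps_ge0 ik HC' (b_ge0 run eps_ge0 (ltnW ik) HC').
rewrite le0r => /predU1P[->|be_gt0]; first by rewrite !mulr0.
rewrite {1}/witness_weight; case: asboolP => witC'.
  rewrite /witness_weight asboolT //.
  exact: witnessed_up ik HC' (budget_end_gt0_active HC' be_gt0) C'C witC'.
by rewrite mul0r mulr_ge0 ?witness_weight_ge0 ?ltW.
Qed.

Lemma dual_gain_step i : (i < k)%N ->
  dual_gain i.+1 = dual_gain i + (t i.+1 - t i) * \sum_(S | act i S) gain S.
Proof.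
move=> ik; rewrite /dual_gain mulr_sumr [X in _ + X]big_mkcond -big_split /=.
by apply: eq_bigr => S _; rewrite (y_step run) // mulrDl; case: ifP; rewrite ?mul0r.
Qed.

Lemma potential_ge0 j : (j <= k)%N -> 0 <= dual_gain j + 2 * witnessed_budget j.
Proof.
elim: j => [|j IH] jk.
  rewrite /dual_gain /witnessed_budget !big1 ?mulr0 ?addr0 // => [C _|S _].
    by rewrite (run_b0 run) mulr0.
  by rewrite (run_y0 run) mul0r.
have d_gt0 := phase_length_gt0 run jk.
have := IH (ltnW jk); have := witnessed_budget_step jk; rewrite dual_gain_step //.
have : 0 <= \sum_(S | act j S) (gain S + 2 * (witness_weight j S * brate j S)).
  by apply: sumr_ge0 => S; apply: gain_active_ge0.
rewrite big_split /= -mulr_sumr; nra.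
Qed.

Lemma witnessed_budget_final_le0 : witnessed_budget k <= 0.
Proof.
apply: sumr_le0 => C HC; apply: mulr_ge0_le0; first exact: witness_weight_ge0.
have := run_final run C; rewrite /active HC negb_or => /andP[nDA].
by rewrite /budget_active nDA -leNgt.
Qed.

Lemma dual_gain_final_ge0 : 0 <= dual_gain k.
Proof. by have := potential_ge0 (leqnn k); have := witnessed_budget_final_le0; lra. Qed.

Lemma dual_crossing_le_cost : \sum_S y k S * (crossing S)%:R <= cost c OPT.
Proof.
apply: le_trans (_ : \sum_(e in OPT) load eu ev (y k) e <= _); last first.
  by apply: ler_sum => e _; apply: (load_final_le run).
rewrite /load (exchange_big_dep predT) //= le_eqVlt; apply/orP; left; apply/eqP.
apply: eq_bigr => S _; rewrite mulr_natr -sumr_const.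
by apply: eq_bigl => e; rewrite !inE andbC.
Qed.

Lemma dual_gain_finalE : dual_gain k = \sum_S y k S * (crossing S)%:R - ysum k y Usp
  - 2 * eps * \sum_(S in Usp | ~~ sat (phi S)) y k S.
Proof.
rewrite /dual_gain /ysum (big_mkcond (mem Usp)) (big_mkcond (fun S => _ && _)) /=.
rewrite mulr_sumr -!sumrB; apply: eq_bigr => S _; rewrite /gain.
by case: (S \in Usp); case: (sat (phi S)); rewrite /= ?mulr1n ?mulr0n; ring.
Qed.

Lemma Usep_sub_valS :
  ysum k y Usp - valS D k y phi CC = \sum_(S in Usp | ~~ sat (phi S)) y k S.
Proof.
rewrite /valS /Defs.val (exchange_big_dep (mem Usp)) /=; last by move=> d U _ /andP[].
rewrite /ysum -sumrB big_mkcondr /=; apply: eq_bigr => U UU.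
have [phiD _] := phiP UU.
case satU: (sat (phi U)) => /=.
  rewrite (big_pred1 (phi U)) ?subrr // => d /=.
  by have [->|] := eqVneq d (phi U); rewrite ?phiD ?satU ?UU ?eqxx ?andbF.
rewrite big_pred0 ?subr0 // => d.
by have [->|] := eqVneq d (phi U); rewrite ?satU ?andbF.
Qed.

End Potential.

Theorem lemma6p5 (R : realType) (V E : finType) (eu ev : E -> V) (c : E -> R)
  (D : {set {set V}}) (eps : R)
  (k : nat) (t : nat -> R) (F : nat -> {set E}) (y b : nat -> {set V} -> R)
  (OPT : {set E}) (tau : V -> R) (phi : {set V} -> {set V})
  (r : {set {set V}} -> V) :
  (forall e, 0 <= c e) ->
  (forall d, d \in D -> #|d| = 2%N) ->
  0 <= eps ->
  moat_run eu ev c D eps k t F y b ->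
  feasible eu ev D OPT ->
  (forall F' : {set E}, feasible eu ev D F' -> cost c OPT <= cost c F') ->
  (forall e, e \in OPT -> c e = 0 -> ~~ feasible eu ev D (OPT :\ e)) ->
  (forall v, is_deact_time eu ev D k t F b v (tau v)) ->
  (forall U, U \in Usep D k y -> phi U \in D /\ separates U (phi U)) ->
  (forall B, B \in forests eu ev D k y OPT ->
     r B \in cover B /\ (forall v, v \in cover B -> tau v <= tau (r B))) ->
  excess c D k y OPT >=
    2 * eps * (ysum k y (Usep D k y)
               - valS D k y phi (canonical_collection eu ev D k t F y OPT tau r)).
Proof.
move=> c_ge0 D2 eps_ge0 run feasOPT optOPT minOPT tauP phiP rP.
have := dual_gain_final_ge0 c_ge0 D2 eps_ge0 run feasOPT optOPT minOPT tauP phiP rP.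
have := dual_crossing_le_cost OPT c_ge0 run.
by rewrite dual_gain_finalE /excess (Usep_sub_valS eu ev t F OPT tau r phiP); lra.
Qed.
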